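(* Let $\mathcal{C}$ be a robust hereditary graph class for which $\beta_{\mathcal{C}}$ is finite. For every integer $d\ge 1$, $$\beta_{\mathcal{C}}(d)=\begin{cases}2^{d-1}+1 & \text{if } \beta_{\mathcal{C}}=1,\\ (\beta_{\mathcal{C}}-1)\,2^{d}+1 & \text{if } \beta_{\mathcal{C}}\ge 2.\end{cases}$$ In particular, the maximum size of a minimal blocking set in a graph of treedepth at most $d$ is $1$ for $d=1$ and $2^{d-2}+1$ for $d\ge2$.
   Context: All graphs are finite, simple, undirected. $\mathrm{OPT}(G)$ is the minimum vertex cover size. $Y\subseteq V(G)$ is a blocking set of $G$ if no vertex cover of $G$ of size $\mathrm{OPT}(G)$ contains $Y$; minimal if no proper subset is a blocking set. $\beta(G)$ is the maximum size of a minimal blocking set of $G$; for a class $\mathcal{C}$, $\beta_{\mathcal{C}}=\sup_{G\in\mathcal{C}}\beta(G)$. Elimination distance of $G$ to $\mathcal{C}$: $\mathrm{ed}_{\mathcal{C}}(G)=0$ if $G\in\mathcal{C}$; otherwise, if $G$ is connected, $\mathrm{ed}_{\mathcal{C}}(G)=1+\min_{v\in V(G)}\mathrm{ed}_{\mathcal{C}}(G-v)$; otherwise it is the maximum of $\mathrm{ed}_{\mathcal{C}}$ over the connected components of $G$. $\beta_{\mathcal{C}}(d)=\max\{\beta(G): \mathrm{ed}_{\mathcal{C}}(G)\le d\}$. Treedepth is the elimination distance to the class consisting of the empty graph. A class is hereditary if closed under taking induced subgraphs, and robust if a graph is in it iff all its connected components are. *)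

From mathcomp Require Import all_boot.
Set Implicit Arguments. Unset Strict Implicit. Unset Printing Implicit Defensive.

Record graph := Graph {
  vert : finType;
  adj : rel vert;
  adj_sym : symmetric adj;
  adj_irr : irreflexive adj }.

Definition induced_adj (G : graph) (S : {set vert G}) :
  rel {x : vert G | x \in S} := fun x y => adj (val x) (val y).

Lemma induced_sym (G : graph) (S : {set vert G}) : symmetric (@induced_adj G S).
Proof. by move=> x y; rewrite /induced_adj adj_sym. Qed.

Lemma induced_irr (G : graph) (S : {set vert G}) : irreflexive (@induced_adj G S).
Proof. by move=> x; rewrite /induced_adj adj_irr. Qed.

Definition induced (G : graph) (S : {set vert G}) : graph :=
  @Graph {x : vert G | x \in S} (@induced_adj G S) (@induced_sym G S) (@induced_irr G S).

Definition delv (G : graph) (v : vert G) : graph := induced [set~ v].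

Definition connected (G : graph) : bool :=
  (0 < #|vert G|) && [forall x, forall y, connect (@adj G) x y].

Definition component (G : graph) (x : vert G) : graph :=
  induced [set y | connect (@adj G) x y].

Definition iso (G H : graph) : Prop :=
  exists f : vert G -> vert H, bijective f /\
    forall x y, adj (f x) (f y) = adj x y.

Definition iso_closed (C : graph -> Prop) : Prop :=
  forall G H, iso G H -> C G -> C H.

Definition hereditary (C : graph -> Prop) : Prop :=
  forall (G : graph) (S : {set vert G}), C G -> C (induced S).

Definition robust (C : graph -> Prop) : Prop :=
  forall G : graph, C G <-> (forall x : vert G, C (component x)).

Definition vertex_cover (G : graph) (X : {set vert G}) : bool :=
  [forall x, forall y, adj x y ==> (x \in X) || (y \in X)].

(* minimum vertex cover size (the full vertex set is always a cover) *)
Definition OPT (G : graph) : nat :=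
  \big[minn/#|vert G|]_(X : {set vert G} | vertex_cover X) #|X|.

Definition blocking (G : graph) (Y : {set vert G}) : bool :=
  [forall X : {set vert G}, (vertex_cover X && (#|X| == OPT G)) ==> ~~ (Y \subset X)].

Definition minimal_blocking (G : graph) (Y : {set vert G}) : bool :=
  minset (@blocking G) Y.

(* beta(G): maximum size of a minimal blocking set (0 if there is none) *)
Definition beta (G : graph) : nat :=
  \max_(Y : {set vert G} | minimal_blocking Y) #|Y|.

Definition is_max_beta (P : graph -> Prop) (m : nat) : Prop :=
  (exists G, P G /\ beta G = m) /\ (forall G, P G -> beta G <= m).

(* Elimination distance: ed_le C d G  <->  ed_C(G) <= d. *)
Inductive ed_le (C : graph -> Prop) : nat -> graph -> Prop :=
| ed_in d G : C G -> ed_le C d G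
| ed_del d G (v : vert G) : connected G -> ed_le C d (delv v) -> ed_le C d.+1 G
| ed_comp d G : ~~ connected G -> (forall x : vert G, ed_le C d (component x)) ->
    ed_le C d G.

(* the class consisting of the empty graph; treedepth = ed to this class *)
Definition empty_class (G : graph) : Prop := #|vert G| = 0.

From mathcomp Require Import all_boot zify.
Set Implicit Arguments. Unset Strict Implicit. Unset Printing Implicit Defensive.

(* A vertex cover of G has size OPT G iff its complement is a maximum
   independent set, so a blocking set is a set meeting every maximum
   independent set, and beta G is the largest size of a minimal such
   "transversal".

   If all induced subgraphs of
     G[S] - v have beta at most b, then beta_on S <= step b = max (b+1, 2b-1);
     a minimal transversal lives inside a single connected component
     ([minimal_transversal_closed]).  Hence ed_C(G) <= d implies
     beta G <= beta_bound b d, the d-fold iterate of [step] from beta_C.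
   - Lower bound ([dblock_minimal], [iterated_doubling]).  Joining two copies
     of a connected F with minimal transversal Z through a hub adjacent to Z
     in one copy and to a single z2 in Z in the other produces a connected
     graph whose elimination distance is one more and which has a minimal
     transversal of size 2|Z| - 1.
   - Theorem 4 ([is_max_beta_ed]) follows by doubling, d times, a component
     of an extremal graph of C (or, when beta_C = 1, d - 1 times K2), and by
     computing beta_bound in closed form. *)

Section SingleIntersection.
Variable T : finType.
Implicit Types Y Z I : {set T}.

Lemma setI1_eq Y I y z : Y :&: I = [set y] -> z \in Y -> z \in I -> z = y.
Proof.
move=> e zY zI; have : z \in Y :&: I by rewrite inE zY zI.
by rewrite e inE => /eqP.
Qed.

Lemma setI1_mem Y I y : Y :&: I = [set y] -> y \in Y /\ y \in I.
Proof. by move=> e; apply/andP; rewrite -in_setI e set11. Qed.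

Lemma setI1_sub Y Z I y : Y :&: I = [set y] -> Z \subset Y -> y \in Z -> Z :&: I = [set y].
Proof.
move=> e sZY yZ; apply/setP => z; rewrite !inE; apply/andP/eqP => [[zZ zI]|->].
  exact: setI1_eq e (subsetP sZY _ zZ) zI.
by split=> //; case: (setI1_mem e).
Qed.

End SingleIntersection.

Section IndependentSets.
Variable G : graph.
Local Notation V := (vert G).
Local Notation adj := (@adj G).
Implicit Types S T I J Y Z : {set V}.

Definition indep I : bool := [forall x in I, forall y in I, ~~ adj x y].
Definition alpha S : nat := \max_(I : {set V} | (I \subset S) && indep I) #|I|.
Definition mis S I : bool := [&& I \subset S, indep I & #|I| == alpha S].
Definition transversal S Y : bool :=
  (Y \subset S) && [forall I, mis S I ==> ~~ [disjoint Y & I]].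
Definition beta_on S : nat := \max_(Y | minset (transversal S) Y) #|Y|.

Lemma indepP I : reflect (forall x y, x \in I -> y \in I -> ~~ adj x y) (indep I).
Proof.
apply: (iffP forall_inP) => [h x y xI yI| h x xI].
  by move/forall_inP: (h x xI); apply.
by apply/forall_inP => y yI; apply: h.
Qed.

Lemma indepS I J : I \subset J -> indep J -> indep I.
Proof. by move=> sIJ /indepP h; apply/indepP => x y xI yI; apply: h; apply: (subsetP sIJ). Qed.

Lemma indep0 : indep set0.
Proof. by apply/indepP => x y; rewrite inE. Qed.

Lemma indep1 x : indep [set x].
Proof. by apply/indepP => y z; rewrite !inE => /eqP -> /eqP ->; rewrite adj_irr. Qed.

Lemma alpha_ge S I : I \subset S -> indep I -> #|I| <= alpha S.
Proof. by move=> sIS iI; apply: (leq_bigmax_cond I); rewrite sIS iI. Qed.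

Lemma alpha_le S m : (forall I, I \subset S -> indep I -> #|I| <= m) -> alpha S <= m.
Proof. by move=> h; apply/bigmax_leqP => I /andP[]; apply: h. Qed.

Lemma alphaS S T : S \subset T -> alpha S <= alpha T.
Proof.
by move=> sST; apply: alpha_le => I sIS iI; apply: alpha_ge => //; apply: subset_trans sST.
Qed.

Lemma alpha_sub S : alpha S <= #|S|.
Proof. by apply: alpha_le => I sIS _; apply: subset_leq_card. Qed.

Lemma misP S I : reflect [/\ I \subset S, indep I & #|I| = alpha S] (mis S I).
Proof. by apply: (iffP and3P) => -[a b c]; split=> //; apply/eqP. Qed.

Lemma mis_sub S I : mis S I -> I \subset S. Proof. by case/misP. Qed.
Lemma mis_indep S I : mis S I -> indep I. Proof. by case/misP. Qed.
Lemma mis_card S I : mis S I -> #|I| = alpha S. Proof. by case/misP. Qed.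

Lemma mis_exists S : exists I, mis S I.
Proof.
have: #|[pred I : {set V} | (I \subset S) && indep I]| > 0.
  by apply/card_gt0P; exists set0; rewrite inE sub0set indep0.
case/(eq_bigmax_cond (fun I : {set V} => #|I|)) => I; rewrite inE => /andP[sIS iI] e.
exists I; rewrite /mis sIS iI /=; apply/eqP; rewrite /alpha -e.
by apply: eq_bigl => J; rewrite inE.
Qed.

Lemma mis_ge S I : I \subset S -> indep I -> alpha S <= #|I| -> mis S I.
Proof.
move=> sIS iI le; apply/misP; split=> //; apply/eqP.
by rewrite eqn_leq le andbT alpha_ge.
Qed.

Lemma mis_subset S T I : T \subset S -> mis S I -> I \subset T ->
  mis T I /\ alpha T = alpha S.
Proof.
move=> sTS /misP [sIS iI cI] sIT.
have e : alpha T = alpha S by apply/eqP; rewrite eqn_leq alphaS //= -cI alpha_ge.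
by split=> //; apply/misP; split; rewrite ?e.
Qed.

Lemma mis_superset S T I : T \subset S -> alpha T = alpha S -> mis T I -> mis S I.
Proof.
move=> sTS e /misP [sIT iI cI]; apply/misP; split; rewrite ?cI //.
exact: subset_trans sTS.
Qed.

Lemma transversalP S Y :
  reflect (Y \subset S /\ forall I, mis S I -> exists2 y, y \in Y & y \in I)
          (transversal S Y).
Proof.
apply: (iffP andP) => -[sYS h]; split=> //.
  move=> I mI; move/forallP: h => /(_ I); rewrite mI /= => /pred0Pn [y /andP[yY yI]].
  by exists y.
apply/forallP => I; apply/implyP => /h [y yY yI]; apply/pred0Pn; exists y; exact/andP.
Qed.

Lemma transversal_sub S Y : transversal S Y -> Y \subset S.
Proof. by case/transversalP. Qed.

Lemma transversal_hit S Y I : transversal S Y -> mis S I -> exists2 y, y \in Y & y \in I.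
Proof. by case/transversalP => _; apply. Qed.

(* Every S has a maximum independent set, so transversals are nonempty. *)
Lemma transversal_gt0 S Y : transversal S Y -> 0 < #|Y|.
Proof.
move=> tY; case: (mis_exists S) => I mI; case: (transversal_hit tY mI) => y yY _.
by apply/card_gt0P; exists y.
Qed.

Lemma minimal_transversalP S Y :
  reflect (transversal S Y /\
           forall y, y \in Y -> exists2 I, mis S I & Y :&: I = [set y])
          (minset (transversal S) Y).
Proof.
apply: (iffP minsetP) => -[tY h]; split=> //.
  move=> y yY; case/transversalP: tY => sYS htY.
  have: ~~ transversal S (Y :\ y).
    apply/negP => /h; rewrite subD1set => /(_ isT) /setP /(_ y).
    by rewrite !inE eqxx yY.
  case/nandP; first by rewrite (subset_trans (subD1set _ _) sYS).
  rewrite negb_forall => /existsP [I]; rewrite negb_imply negbK => /andP [mI dI].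
  exists I => //; apply/setP => z; rewrite !inE.
  apply/andP/eqP => [[zY zI]|->]; last first.
    split=> //; case: (htY I mI) => w wY wI; case: (eqVneq w y) => [<- //|nwy].
    by move/pred0P: dI => /(_ w); rewrite !inE nwy wY wI.
  apply/eqP; apply/negPn/negP => nzy.
  by move/pred0P: dI => /(_ z); rewrite !inE nzy zY zI.
move=> B tB sBY; apply/eqP; rewrite eqEsubset sBY /=; apply/subsetP => y yY.
case: (h y yY) => I mI eI; case/transversalP: tB => _ /(_ I mI) [z zB zI].
by rewrite -(setI1_eq eI (subsetP sBY _ zB) zI).
Qed.

Lemma beta_on_ge S Y : minset (transversal S) Y -> #|Y| <= beta_on S.
Proof. by move=> mY; apply: (leq_bigmax_cond Y). Qed.

Lemma beta_on_le S m : (forall Y, minset (transversal S) Y -> #|Y| <= m) -> beta_on S <= m.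
Proof. by move=> h; apply/bigmax_leqP. Qed.

Lemma beta_on_private S Z Y0 : transversal S Z -> Y0 \subset Z ->
  (forall y, y \in Y0 -> exists2 I, mis S I & Z :&: I = [set y]) ->
  #|Y0| <= beta_on S /\
  ((exists2 I, mis S I & [disjoint Y0 & I]) -> #|Y0| < beta_on S).
Proof.
move=> tZ sY0Z hY0; case: (minset_exists tZ) => T mT sTZ.
have [tT _] := minimal_transversalP _ _ mT.
have sY0T : Y0 \subset T.
  apply/subsetP => y yY0; case: (hY0 y yY0) => I mI eI.
  case: (transversal_hit tT mI) => z zT zI.
  by rewrite -(setI1_eq eI (subsetP sTZ _ zT) zI).
have le := beta_on_ge mT; split; first exact: leq_trans (subset_leq_card sY0T) le.
case=> I mI dI; apply: leq_trans le; apply: proper_card.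
rewrite properEneq sY0T andbT; apply/eqP => eY.
case: (transversal_hit tT mI) => z zT zI.
by move/pred0P: dI => /(_ z); rewrite /= eY zT zI.
Qed.

Definition step (b : nat) : nat := maxn b.+1 (2 * b).-1.

Lemma add_le_double_pred a c b : a <= b -> c <= b -> (a < b) || (c < b) -> a + c <= (2 * b).-1.
Proof. by move=> ? ? /orP []; lia. Qed.

Section DeleteVertex.
Variables (S : {set V}) (v : V) (b : nat).
Hypothesis vS : v \in S.
Hypothesis beta_H : forall T, T \subset S :\ v -> beta_on T <= b.
Let H := S :\ v.
Let N := [set x | adj v x].
Let W := H :\: N.

Let sHS : H \subset S. Proof. exact: subD1set. Qed.
Let sWH : W \subset H. Proof. exact: subsetDl. Qed.
Let vNH : v \notin H. Proof. by rewrite !inE eqxx. Qed.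

Lemma mis_drop_v I : mis S I -> v \in I ->
  [/\ I :\ v \subset W, indep (I :\ v) & #|I :\ v| = (alpha S).-1].
Proof.
move=> /misP [sIS iI cI] vI; split.
- apply/subsetP => x; rewrite !inE => /andP [nxv xI].
  by rewrite nxv (subsetP sIS _ xI) andbT /= (indepP _ iI v x vI xI).
- exact: indepS (subD1set _ _) iI.
- by rewrite -cI (cardsD1 v I) vI.
Qed.

Lemma extend_W J : J \subset W -> indep J ->
  [/\ v |: J \subset S, indep (v |: J) & #|v |: J| = #|J|.+1].
Proof.
move=> sJW iJ; have sJS : J \subset S by rewrite (subset_trans sJW) ?(subset_trans sWH).
have vJ : v \notin J by apply: contra vNH => /(subsetP (subset_trans sJW sWH)).
split; last by rewrite cardsU1 vJ.
  by rewrite subUset sub1set vS sJS.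
apply/indepP => x y; rewrite !inE => /predU1P [-> | xJ] /predU1P [-> | yJ].
- by rewrite adj_irr.
- by move/(subsetP sJW): yJ; rewrite !inE => /andP [/negbTE ->].
- by move/(subsetP sJW): xJ; rewrite !inE adj_sym => /andP [/negbTE ->].
- exact: (indepP _ iJ).
Qed.

Lemma mis_extend_W J : J \subset W -> indep J -> alpha S <= #|J|.+1 -> mis S (v |: J).
Proof. by move=> sJW iJ le; case: (extend_W sJW iJ) => s i c; apply: mis_ge; rewrite ?c. Qed.

Lemma alpha_W_lt : (alpha W).+1 <= alpha S.
Proof.
case: (mis_exists W) => J /misP [sJW iJ <-]; case: (extend_W sJW iJ) => s i <-.
exact: alpha_ge.
Qed.

Lemma mis_H_S I : alpha H = alpha S -> mis H I -> mis S I.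
Proof. by move=> e; apply: mis_superset. Qed.

Lemma mis_S_H I : alpha H = alpha S -> mis S I -> v \notin I -> mis H I.
Proof.
move=> e /misP [sIS iI cI] vI; apply/misP; split; rewrite ?e //.
by apply/subsetP => x xI; rewrite !inE (subsetP sIS _ xI) andbT; apply: contraNneq vI => <-.
Qed.

Section SameAlpha.
Variable Y : {set V}.
Hypotheses (eH : alpha H = alpha S) (vY : v \notin Y).
Hypothesis mY : minset (transversal S) Y.

Let YB := [set y in Y | [exists I, [&& mis S I, v \in I & Y :&: I == [set y]]]].
Let YA := Y :\: YB.

Let tY : transversal S Y. Proof. exact: minsetp mY. Qed.

Let sYBY : YB \subset Y. Proof. by apply/subsetP => y; rewrite inE => /andP []. Qed.

Let card_Y : #|Y| = #|YA| + #|YB|.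
Proof. by rewrite -(cardsID YB Y) (setIidPr sYBY) addnC. Qed.

Let YA_compl z : z \in Y -> z \notin YA -> z \in YB.
Proof. by move=> zY; rewrite inE zY andbT negbK. Qed.

Lemma private_YB w : w \in YB -> exists2 I, mis S I & v \in I /\ Y :&: I = [set w].
Proof. by rewrite inE => /andP [_ /existsP [I /and3P [mI vI /eqP e]]]; exists I. Qed.

Lemma private_YB_W w : w \in YB ->
  exists2 J : {set V}, [/\ J \subset W :\: YA, indep J & #|J| = (alpha S).-1] & Y :&: J = [set w].
Proof.
move=> wB; case: (private_YB wB) => I mI [vI eI]; case: (mis_drop_v mI vI) => s i c.
have eJ : Y :&: (I :\ v) = [set w].
  apply/setP => z; move/setP/(_ z): eI; rewrite !inE => <-.
  by case: (eqVneq z v) => [->|]; rewrite ?(negbTE vY).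
exists (I :\ v) => //; split=> //; apply/subsetP => x xJ.
rewrite inE (subsetP s _ xJ) andbT; apply/negP => /[dup] xA.
by rewrite inE => /andP [_ xY]; move: xA; rewrite (setI1_eq eJ xY xJ) inE wB.
Qed.

Lemma private_YA y : y \in YA ->
  exists2 I, mis H I & [/\ Y :&: I = [set y], I \subset H :\: YB & mis S I].
Proof.
rewrite inE => /andP [nyB yY]; case/minimal_transversalP: mY => _ /(_ y yY) [I mI eI].
have vI : v \notin I.
  apply: contra nyB => vI; rewrite inE yY; apply/existsP.
  by exists I; rewrite mI vI eI eqxx.
have mIH := mis_S_H eH mI vI; exists I => //; split=> //.
apply/subsetP => x xI; rewrite inE (subsetP (mis_sub mIH) _ xI) andbT.
by apply: contra nyB => xB; rewrite -(setI1_eq eI (subsetP sYBY _ xB) xI).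
Qed.

Lemma YB_sub_W : YB \subset W.
Proof.
apply/subsetP => w wB; case: (private_YB_W wB) => J [sJ _ _] eJ.
by case: (setI1_mem eJ) => _ /(subsetP sJ); rewrite inE => /andP [].
Qed.

Lemma YA_sub_HB : YA \subset H :\: YB.
Proof.
apply/subsetP => z zA; case: (private_YA zA) => I mI [eI sI _].
by case: (setI1_mem eI) => _ /(subsetP sI).
Qed.

Lemma hit_extension J : J \subset W -> indep J -> alpha S <= #|J|.+1 ->
  exists2 z, z \in Y & z \in J.
Proof.
move=> sJW iJ le; case: (transversal_hit tY (mis_extend_W sJW iJ le)) => z zY.
by case/setU1P => [ezv|zJ]; [move: vY; rewrite -ezv zY | exists z].
Qed.

(* Points of YA keep private sets inside H - YB, where alpha is unchanged;
   so YA is a transversal there and |YA| <= b. *)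
Lemma card_YA : #|YA| <= b.
Proof.
case: (set_0Vmem YA) => [->|[y yA]]; first by rewrite cards0.
pose T := H :\: YB.
have sTH : T \subset H := subsetDl _ _.
have sTS : T \subset S := subset_trans sTH sHS.
case: (private_YA yA) => P _ [_ sPT mPS]; have [_ eT] := mis_subset sTS mPS sPT.
have tT : transversal T YA.
  apply/transversalP; split=> [|I mI]; first exact: YA_sub_HB.
  case: (transversal_hit tY (mis_superset sTS eT mI)) => z zY zI; exists z => //.
  by rewrite inE zY andbT; move: (subsetP (mis_sub mI) _ zI); rewrite inE => /andP [].
have pr z : z \in YA -> exists2 I, mis T I & YA :&: I = [set z].
  move=> zA; case: (private_YA zA) => I _ [eI sIT mIS]; exists I.
    by case: (mis_subset sTS mIS sIT).
  exact: setI1_sub eI (subsetDl _ _) zA.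
have [le _] := beta_on_private tT (subxx YA) pr.
exact: leq_trans le (beta_H sTH).
Qed.

(* Points of YB keep private sets (minus v) inside W - YA, where alpha drops
   by exactly one; so YB is a transversal there and |YB| <= b. *)
Lemma card_YB : #|YB| <= b.
Proof.
case: (set_0Vmem YB) => [->|[w wB]]; first by rewrite cards0.
pose T := W :\: YA.
have sTH : T \subset H := subset_trans (subsetDl _ _) sWH.
have aS := alpha_W_lt.
have eT : alpha T = (alpha S).-1.
  case: (private_YB_W wB) => J [sJ iJ cJ] _.
  apply/eqP; rewrite eqn_leq -{2}cJ (alpha_ge sJ iJ) andbT.
  by rewrite -ltnS (ltn_predK aS) (leq_ltn_trans (alphaS (subsetDl _ _)) aS).
have tT : transversal T YB.
  apply/transversalP; split.
    by apply/subsetP => z zB; rewrite inE (subsetP YB_sub_W _ zB) andbT inE zB.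
  move=> J /misP [sJT iJ cJ].
  case: (hit_extension (subset_trans sJT (subsetDl _ _)) iJ) => [|z zY zJ].
    by rewrite cJ eT (ltn_predK aS).
  exists z => //; apply: YA_compl => //.
  by move: (subsetP sJT _ zJ); rewrite inE => /andP [].
have pr z : z \in YB -> exists2 J, mis T J & YB :&: J = [set z].
  move=> zB; case: (private_YB_W zB) => J [sJ iJ cJ] eJ.
  exists J; first by apply: mis_ge; rewrite // cJ eT.
  exact: setI1_sub eJ sYBY zB.
have [le _] := beta_on_private tT (subxx YB) pr.
exact: leq_trans le (beta_H sTH).
Qed.

(* If some maximum independent set L of H avoids YA, then YA together with
   Y :&: L is a transversal of H - (YB - L) with a maximum independent set
   (namely L) avoiding YA, so |YA| < b. *)
Lemma card_YA_lt : (exists2 L, mis H L & [disjoint YA & L]) -> #|YA| < b.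
Proof.
case=> L mL dL; pose Q := Y :&: L; pose T := H :\: (YB :\: Q).
have sTH : T \subset H := subsetDl _ _.
have sTS : T \subset S := subset_trans sTH sHS.
have sLT : L \subset T.
  apply/subsetP => x xL; rewrite in_setD (subsetP (mis_sub mL) _ xL) andbT.
  rewrite in_setD negb_and negbK in_setI xL andbT.
  by case: (boolP (x \in YB)) => xB; rewrite ?orbT // (subsetP sYBY _ xB).
have [mLT eT] := mis_subset sTS (mis_H_S eH mL) sLT.
pose Z := YA :|: Q.
have sZY : Z \subset Y by rewrite subUset subsetDl subsetIl.
have tT : transversal T Z.
  apply/transversalP; split.
    rewrite subUset (subset_trans YA_sub_HB) ?setDS ?subsetDl //=.
    exact: subset_trans (subsetIr _ _) sLT.
  move=> I mI; case: (transversal_hit tY (mis_superset sTS eT mI)) => z zY zI.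
  exists z => //; rewrite inE; case: (boolP (z \in YA)) => //= zA.
  have := subsetP (mis_sub mI) _ zI.
  by rewrite in_setD in_setD (YA_compl zY zA) andbT negbK => /andP [].
have pr z : z \in YA -> exists2 I, mis T I & Z :&: I = [set z].
  move=> zA; case: (private_YA zA) => I mI [eI sIHB mIS].
  have sIT : I \subset T by apply: subset_trans sIHB _; rewrite setDS ?subsetDl.
  exists I; first by case: (mis_subset sTS mIS sIT).
  by apply: setI1_sub eI sZY _; rewrite inE zA.
have [_ lt] := beta_on_private tT (subsetUl _ _) pr.
by apply: leq_trans (lt _) (beta_H sTH); exists L.
Qed.

(* Otherwise pick y in YA on a maximum independent set of H, with private set
   P.  In T = (W :|: P) - YA the independence number is alpha S - 1, realised
   by P - y which avoids YB; YB plus the neighbours of v in T is a transversal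
   of T, so |YB| < b. *)
Lemma card_YB_lt : (forall L, mis H L -> ~~ [disjoint YA & L]) -> #|YB| < b.
Proof.
move=> hL; case: (mis_exists H) => L0 mL0.
case/pred0Pn: (hL L0 mL0) => y /andP [yA _].
case: (private_YA yA) => P mP [eP _ _].
have [yY yP] := setI1_mem eP.
pose T := (W :|: P) :\: YA.
have sTH : T \subset H by apply: subset_trans (subsetDl _ _) _; rewrite subUset sWH (mis_sub mP).
pose K := P :\ y.
have sKT : K \subset T.
  apply/subsetP => x; rewrite !inE => /andP [xy xP]; rewrite xP orbT andbT.
  by apply/negP => /andP [_ xY]; move: xy; rewrite (setI1_eq eP xY xP) eqxx.
have cK : #|K| = (alpha S).-1 by rewrite -eH -(mis_card mP) (cardsD1 y P) yP.
have iK : indep K by exact: indepS (subD1set P y) (mis_indep mP).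
have ltT : alpha T < alpha S.
  rewrite ltnNge; apply/negP => le; case: (mis_exists T) => L mL.
  have mLH : mis H L.
    apply: mis_ge; [exact: subset_trans (mis_sub mL) sTH | exact: mis_indep mL |].
    by rewrite (mis_card mL) eH.
  case/pred0Pn: (hL L mLH) => z /andP [zA zL]; have {}zA : z \in YA := zA.
  by have := subsetP (mis_sub mL) _ zL; rewrite in_setD zA.
have eT : alpha T = (alpha S).-1.
  by apply/eqP; rewrite eqn_leq -{2}cK (alpha_ge sKT iK) andbT -ltnS (ltn_predK ltT).
pose Z := YB :|: (T :&: N).
have tT : transversal T Z.
  apply/transversalP; split.
    rewrite subUset subsetIl andbT; apply/subsetP => z zB.
    by rewrite in_setD in_setU (subsetP YB_sub_W _ zB) /= andbT in_setD zB.
  move=> J /misP [sJT iJ cJ].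
  case: (set_0Vmem (J :&: N)) => [eJ|[x]]; last first.
    rewrite inE => /andP [xJ xN]; exists x => //.
    by rewrite in_setU in_setI (subsetP sJT _ xJ) xN orbT.
  have sJW : J \subset W.
    apply/subsetP => x xJ; rewrite in_setD (subsetP sTH _ (subsetP sJT _ xJ)) andbT.
    by apply/negP => xN; move/setP/(_ x): eJ; rewrite in_setI in_set0 xJ xN.
  case: (hit_extension sJW iJ) => [|z zY zJ]; first by rewrite cJ eT (ltn_predK ltT).
  exists z => //; rewrite inE YA_compl //.
  by move: (subsetP sJT _ zJ); rewrite inE => /andP [].
have pr w : w \in YB -> exists2 J, mis T J & Z :&: J = [set w].
  move=> wB; case: (private_YB_W wB) => J [sJ iJ cJ] eJ.
  have sJW : J \subset W := subset_trans sJ (subsetDl _ _).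
  have sJT : J \subset T by apply: subset_trans sJ _; rewrite setSD // subsetUl.
  exists J; first by apply: mis_ge; rewrite // cJ eT.
  apply/setP => x; rewrite in_setI in_setU in_set1.
  apply/idP/eqP => [/andP [/orP [xB|/setIP [_ xN]] xJ]|->].
  - exact: setI1_eq eJ (subsetP sYBY _ xB) xJ.
  - by move: (subsetP sJW _ xJ); rewrite inE xN.
  - by case: (setI1_mem eJ) => _ ->; rewrite wB.
have [_ lt] := beta_on_private tT (subsetUl _ _) pr.
apply: leq_trans (lt _) (beta_H sTH); exists K; first by apply: mis_ge; rewrite // cK eT.
apply/pred0P => z /=; apply/andP => -[zB /setD1P [zy zP]].
by move: zy; rewrite (setI1_eq eP (subsetP sYBY _ zB) zP) eqxx.
Qed.

Lemma card_same_alpha : #|Y| <= (2 * b).-1.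
Proof.
rewrite card_Y; apply: add_le_double_pred card_YA card_YB _.
case: (boolP [exists L, mis H L && [disjoint YA & L]]) => [/existsP [L /andP [mL dL]]|/existsPn hL].
  by rewrite card_YA_lt //; exists L.
by rewrite card_YB_lt ?orbT // => L mL; apply: contraT => /negbNE dL; have := hL L; rewrite mL dL.
Qed.

End SameAlpha.

Lemma mis_through_v I : alpha H < alpha S -> mis S I -> v \in I.
Proof.
move=> ltHS mI; apply: contraT => vI.
have sIH : I \subset H.
  apply/subsetP => x xI; rewrite !inE (subsetP (mis_sub mI) _ xI) andbT.
  by apply: contraNneq vI => <-.
by move: ltHS; rewrite -(mis_card mI) ltnNge (alpha_ge sIH (mis_indep mI)).
Qed.

Lemma alpha_W_smaller : alpha H < alpha S -> (alpha W).+1 = alpha S.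
Proof.
move=> ltHS; apply/eqP; rewrite eqn_leq alpha_W_lt /=.
case: (mis_exists S) => I mI; case: (mis_drop_v mI (mis_through_v ltHS mI)) => s i c.
by rewrite -(ltn_predK alpha_W_lt) ltnS -c alpha_ge.
Qed.

(* In that case a minimal transversal is either [set v] or a minimal
   transversal of W. *)
Lemma card_smaller_alpha Y : alpha H < alpha S -> minset (transversal S) Y -> #|Y| <= b.+1.
Proof.
move=> ltHS mY; case/minimal_transversalP: (mY) => tY priv.
have eW := alpha_W_smaller ltHS.
case: (boolP (v \in Y)) => vY.
  have t1 : transversal S [set v].
    apply/transversalP; split=> [|I mI]; first by rewrite sub1set.
    by exists v; rewrite ?inE ?mis_through_v.
  by rewrite -(minsetinf mY t1) ?sub1set ?cards1.
have tW : transversal W Y.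
  apply/transversalP; split.
    apply/subsetP => y yY; case: (priv y yY) => I mI eI.
    case: (mis_drop_v mI (mis_through_v ltHS mI)) => s _ _; apply: (subsetP s).
    by case: (setI1_mem eI) => _ yI; rewrite !inE yI andbT; apply: contraNneq vY => <-.
  move=> J /misP [sJW iJ cJ].
  case: (transversal_hit tY (mis_extend_W sJW iJ _)) => [|z zY]; first by rewrite cJ eW.
  by case/setU1P => [ezv|zJ]; [move: vY; rewrite -ezv zY | exists z].
have priv' y : y \in Y -> exists2 I, mis W I & Y :&: I = [set y].
  move=> yY; case: (priv y yY) => I mI eI.
  case: (mis_drop_v mI (mis_through_v ltHS mI)) => s i c.
  exists (I :\ v); first by apply: mis_ge; rewrite // c -eW.
  apply/setP => z; move/setP/(_ z): eI; rewrite !inE => <-.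
  by case: (eqVneq z v) => [->|]; rewrite ?(negbTE vY).
have [le _] := beta_on_private tW (subxx Y) priv'.
exact: leq_trans le (leq_trans (beta_H sWH) (leqnSn b)).
Qed.

(* If deleting v keeps alpha and v is in Y, then Y - v is a transversal of H
   with private sets. *)
Lemma card_same_alpha_v Y : alpha H = alpha S -> v \in Y -> minset (transversal S) Y ->
  #|Y| <= b.+1.
Proof.
move=> eH vY mY; case/minimal_transversalP: (mY) => tY priv.
have tH : transversal H (Y :\ v).
  apply/transversalP; split; first exact: setSD (transversal_sub tY).
  move=> I mI; case: (transversal_hit tY (mis_H_S eH mI)) => y yY yI; exists y => //.
  by rewrite !inE yY andbT; apply: contraNneq vNH => <-; apply: (subsetP (mis_sub mI)).
have priv' y : y \in Y :\ v -> exists2 I, mis H I & (Y :\ v) :&: I = [set y].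
  rewrite !inE => /andP [yv yY]; case: (priv y yY) => I mI eI.
  have vI : v \notin I by apply: contra yv => vI; rewrite (setI1_eq eI vY vI).
  exists I; first exact: mis_S_H.
  apply/setP => z; move/setP/(_ z): eI; rewrite !inE => <-.
  by case: (eqVneq z v) => [->|]; rewrite ?(negbTE vI) ?andbF.
have [le _] := beta_on_private tH (subxx _) priv'.
by rewrite (cardsD1 v Y) vY add1n ltnS (leq_trans le (beta_H (subxx _))).
Qed.

Lemma beta_on_del : beta_on S <= step b.
Proof.
apply: beta_on_le => Y mY; rewrite /step leq_max.
have [ltHS | geHS] := ltnP (alpha H) (alpha S); first by rewrite card_smaller_alpha.
have eH : alpha H = alpha S by apply/eqP; rewrite eqn_leq geHS alphaS.
case: (boolP (v \in Y)) => vY; first by rewrite card_same_alpha_v.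
by rewrite card_same_alpha ?orbT.
Qed.

End DeleteVertex.

Section ClosedSet.
Variable C : {set V}.
Hypothesis closedC : forall x y, x \in C -> y \notin C -> ~~ adj x y.

Lemma indep_join S I1 I2 : I1 \subset S :&: C -> I2 \subset S :\: C -> indep I1 -> indep I2 ->
  [/\ I1 :|: I2 \subset S, indep (I1 :|: I2) & #|I1 :|: I2| = #|I1| + #|I2|].
Proof.
move=> s1 s2 /indepP i1 /indepP i2.
have in1 x : x \in I1 -> x \in C by move/(subsetP s1); rewrite inE => /andP [].
have out2 x : x \in I2 -> x \notin C by move/(subsetP s2); rewrite inE => /andP [].
split.
- by rewrite subUset (subset_trans s1 (subsetIl _ _)) (subset_trans s2 (subsetDl _ _)).
- apply/indepP => x y /setUP [xI|xI] /setUP [yI|yI]; first exact: i1.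
  + exact: closedC (in1 x xI) (out2 y yI).
  + by rewrite adj_sym; exact: closedC (in1 y yI) (out2 x xI).
  + exact: i2.
- suff e : I1 :&: I2 = set0 by rewrite cardsU e cards0 subn0.
  by apply/setP => x; rewrite !inE; apply/andP => -[/in1 xC /out2]; rewrite xC.
Qed.

Lemma alpha_split S : alpha S = alpha (S :&: C) + alpha (S :\: C).
Proof.
apply/eqP; rewrite eqn_leq; apply/andP; split.
  apply: alpha_le => I sIS iI; rewrite -(cardsID C I); apply: leq_add.
    by apply: alpha_ge; [exact: setSI | exact: indepS (subsetIl _ _) iI].
  by apply: alpha_ge; [exact: setSD | exact: indepS (subsetDl _ _) iI].
case: (mis_exists (S :&: C)) => I1 /misP [s1 i1 <-].
case: (mis_exists (S :\: C)) => I2 /misP [s2 i2 <-].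
by case: (indep_join s1 s2 i1 i2) => s i <-; apply: alpha_ge.
Qed.

Lemma mis_split S I : mis S I -> mis (S :&: C) (I :&: C) /\ mis (S :\: C) (I :\: C).
Proof.
case/misP => sIS iI cI.
have a1 : #|I :&: C| <= alpha (S :&: C).
  by apply: alpha_ge; [exact: setSI | exact: indepS (subsetIl _ _) iI].
have a2 : #|I :\: C| <= alpha (S :\: C).
  by apply: alpha_ge; [exact: setSD | exact: indepS (subsetDl _ _) iI].
have e := cardsID C I; rewrite cI (alpha_split S) in e.
split; apply: mis_ge; rewrite ?setSI ?setSD ?(indepS _ iI) ?subsetIl ?subsetDl //.
  by move: e a1 a2; clear; lia.
by move: e a1 a2; clear; lia.
Qed.

Lemma mis_join S I1 I2 : mis (S :&: C) I1 -> mis (S :\: C) I2 -> mis S (I1 :|: I2).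
Proof.
case/misP => s1 i1 c1; case/misP => s2 i2 c2.
case: (indep_join s1 s2 i1 i2) => s i c.
by apply: mis_ge; rewrite // c c1 c2 (alpha_split S).
Qed.

(* A minimal transversal meeting C lies inside C, and is a minimal
   transversal of S :&: C: combine the private set of a point inside C with
   the private set of a point outside C to get an unhit maximum set. *)
Lemma minimal_transversal_closed S Y y : minset (transversal S) Y -> y \in Y -> y \in C ->
  minset (transversal (S :&: C)) Y.
Proof.
case/minimal_transversalP => tY priv yY yC.
have sYC : Y \subset C.
  apply/subsetP => y' y'Y; apply: contraT => y'C.
  case: (priv y yY) => I mI eI; case: (priv y' y'Y) => I' mI' eI'.
  have [m1 _] := mis_split mI'; have [_ m2] := mis_split mI.
  case: (transversal_hit tY (mis_join m1 m2)) => z zY; rewrite in_setU in_setI in_setD.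
  case/orP => [/andP [zI' zC] | /andP [zC zI]].
    by move: y'C; rewrite -(setI1_eq eI' zY zI') zC.
  by move: zC; rewrite (setI1_eq eI zY zI) yC.
apply/minimal_transversalP; split.
  apply/transversalP; split; first by rewrite subsetI (transversal_sub tY) sYC.
  move=> J mJ; case: (mis_exists S) => I0 mI0; have [_ m2] := mis_split mI0.
  case: (transversal_hit tY (mis_join mJ m2)) => z zY; rewrite in_setU in_setD.
  case/orP => [zJ|/andP [zC _]]; first by exists z.
  by move: zC; rewrite (subsetP sYC _ zY).
move=> y' y'Y; case: (priv y' y'Y) => I mI eI; have [m1 _] := mis_split mI.
exists (I :&: C) => //; rewrite setIA eI.
by apply/setP => z; rewrite !inE; case: (eqVneq z y') => [->|] //=; rewrite (subsetP sYC _ y'Y).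
Qed.

End ClosedSet.
End IndependentSets.

Section Embedding.
Variables (G1 G2 : graph) (f : vert G1 -> vert G2).
Hypothesis finj : injective f.
Hypothesis fadj : forall x y, adj (f x) (f y) = adj x y.

Lemma sub_im (A B : {set vert G1}) : (f @: A \subset f @: B) = (A \subset B).
Proof.
apply/idP/idP => [h|]; last exact: imsetS.
by apply/subsetP => x xA; rewrite -(mem_imset _ _ finj) (subsetP h) // imset_f.
Qed.

Lemma indep_im (I : {set vert G1}) : indep (f @: I) = indep I.
Proof.
apply/indepP/indepP => h.
  by move=> x y xI yI; rewrite -fadj; apply: h; apply: imset_f.
by move=> x y /imsetP [x' x'I ->] /imsetP [y' y'I ->]; rewrite fadj; apply: h.
Qed.

Lemma pre_im (T : {set vert G1}) (J : {set vert G2}) :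
  J \subset f @: T -> f @: (f @^-1: J) = J /\ f @^-1: J \subset T.
Proof.
move=> sJ; split.
  apply/setP => y; apply/imsetP/idP => [[x] | yJ].
    by rewrite inE => xJ ->.
  by case/imsetP: (subsetP sJ _ yJ) => x _ e; exists x; rewrite // inE -e.
apply/subsetP => x; rewrite inE => /(subsetP sJ); by rewrite (mem_imset _ _ finj).
Qed.

Lemma alpha_im (T : {set vert G1}) : alpha (f @: T) = alpha T.
Proof.
apply/eqP; rewrite eqn_leq; apply/andP; split.
  apply: alpha_le => J sJ iJ; have [e s] := pre_im sJ.
  rewrite -e card_imset //; apply: alpha_ge => //.
  by rewrite -indep_im e.
apply: alpha_le => I sI iI; rewrite -(card_imset _ finj); apply: alpha_ge.
  by rewrite sub_im.
by rewrite indep_im.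
Qed.

Lemma mis_im (T I : {set vert G1}) : mis (f @: T) (f @: I) = mis T I.
Proof. by rewrite /mis sub_im indep_im card_imset // alpha_im. Qed.

Lemma transversal_im (T Y : {set vert G1}) : transversal (f @: T) (f @: Y) = transversal T Y.
Proof.
apply/transversalP/transversalP => -[s h]; split; first by rewrite -sub_im.
- move=> I mI; rewrite -mis_im in mI; case: (h _ mI) => z /imsetP [y yY ->].
  by rewrite (mem_imset _ _ finj) => yI; exists y.
- by rewrite sub_im.
move=> J mJ; have [e sJ] := pre_im (mis_sub mJ).
rewrite -e mis_im in mJ; case: (h _ mJ) => y yY yI; exists (f y); first exact: imset_f.
by rewrite -e imset_f.
Qed.

Lemma minimal_transversal_im (T Y : {set vert G1}) : minset (transversal (f @: T)) (f @: Y) = minset (transversal T) Y.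
Proof.
have iI : forall A B : {set vert G1}, f @: (A :&: B) = f @: A :&: f @: B.
  by move=> A B; apply: imsetI => x y _ _; apply: finj.
apply/minimal_transversalP/minimal_transversalP => -[t h]; split; first by rewrite -transversal_im.
- move=> y yY; case: (h (f y) (imset_f _ yY)) => J mJ eJ.
  have [e _] := pre_im (mis_sub mJ).
  exists (f @^-1: J); first by rewrite -mis_im e.
  by apply: (imset_inj finj); rewrite iI e eJ imset_set1.
- by rewrite transversal_im.
move=> z /imsetP [y yY ->]; case: (h y yY) => I mI eI; exists (f @: I).
  by rewrite mis_im.
by rewrite -iI eI imset_set1.
Qed.

Lemma beta_on_im (T : {set vert G1}) : beta_on (f @: T) = beta_on T.
Proof.
apply/eqP; rewrite eqn_leq; apply/andP; split.
  apply: beta_on_le => Y' mY'; have [e _] := pre_im (transversal_sub (minsetp mY')).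
  rewrite -e card_imset //; apply: beta_on_ge; by rewrite -minimal_transversal_im e.
apply: beta_on_le => Y mY; rewrite -(card_imset _ finj); apply: beta_on_ge; by rewrite minimal_transversal_im.
Qed.

End Embedding.
Lemma bigmin_le (I : finType) (P : pred I) (F : I -> nat) d i0 :
  P i0 -> \big[minn/d]_(i | P i) F i <= F i0.
Proof.
move=> Pi0; have : i0 \in index_enum I by rewrite mem_index_enum.
elim: (index_enum I) => [//|j r IH]; rewrite in_cons big_cons => /orP [/eqP <-|ir].
  by rewrite Pi0; apply: geq_minl.
by case: (P j); [exact: leq_trans (geq_minr _ _) (IH ir) | exact: IH ir].
Qed.

Section VertexCovers.
Variable G : graph.
Local Notation V := (vert G).

Lemma vertex_coverE (X : {set V}) : vertex_cover X = indep (~: X).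
Proof.
apply/forallP/indepP => [h x y | h x]; rewrite ?inE.
  move=> nx ny; apply/negP => a; move/forallP: (h x) => /(_ y).
  by rewrite a (negbTE nx) (negbTE ny).
apply/forallP => y; apply/implyP => a; apply/negPn/negP; rewrite negb_or => /andP [nx ny].
by move: (h x y); rewrite !inE nx ny a => /(_ isT isT).
Qed.

Lemma OPTE : OPT G = #|V| - alpha [set: V].
Proof.
apply/eqP; rewrite eqn_leq; apply/andP; split.
  case: (mis_exists [set: V]) => I /misP [_ iI cI].
  have vc : vertex_cover (~: I) by rewrite vertex_coverE setCK.
  rewrite /OPT; apply: leq_trans (bigmin_le (fun X : {set V} => #|X|) #|V| vc) _.
  by rewrite cardsCs setCK cI.
rewrite /OPT; elim/big_ind: _ => //.
- by rewrite leq_subr.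
- by move=> x y hx hy; rewrite leq_min hx hy.
move=> X vc; rewrite vertex_coverE in vc.
have := alpha_ge (subsetT (~: X)) vc; rewrite cardsCs setCK.
by have := subset_leq_card (subsetT X); rewrite cardsT; lia.
Qed.

Lemma blockingE (Y : {set V}) : blocking Y = transversal [set: V] Y.
Proof.
apply/forallP/transversalP => [h | [_ h] X].
  split; first exact: subsetT.
  move=> I /misP [_ iI cI]; move: (h (~: I)); rewrite vertex_coverE setCK iI /=.
  rewrite OPTE cardsCs setCK cI eqxx /= => /subsetPn [y yY].
  by rewrite inE negbK => yI; exists y.
apply/implyP => /andP [vc /eqP cX]; rewrite vertex_coverE in vc.
have mI : mis [set: V] (~: X).
  apply/misP; split; [exact: subsetT | exact: vc | ].
  rewrite cardsCs setCK cX OPTE.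
  have := alpha_sub [set: V]; rewrite cardsT; lia.
case: (h _ mI) => y yY; rewrite inE => yX.
by apply/negP => /subsetP /(_ y yY); rewrite (negbTE yX).
Qed.

Lemma betaE : beta G = beta_on [set: V].
Proof.
rewrite /beta /beta_on; apply: eq_bigl => Y; rewrite /minimal_blocking.
by apply: minset_eq => Z; rewrite blockingE.
Qed.

Lemma val_setT (S0 : {set V}) : val @: [set: vert (induced S0)] = S0.
Proof.
apply/setP => x; apply/imsetP/idP => [[y _ ->]|xS]; first exact: valP.
by exists (Sub x xS : vert (induced S0)).
Qed.

Lemma beta_on_induced (S0 T : {set V}) : T \subset S0 ->
  beta_on T = beta_on (val @^-1: T : {set vert (induced S0)}).
Proof.
move=> sT; have vinj : injective (val : vert (induced S0) -> V) := val_inj.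
have sT' : T \subset val @: [set: vert (induced S0)] by rewrite val_setT.
have [e _] := pre_im vinj sT'.
by rewrite -{1}e (beta_on_im vinj).
Qed.

Lemma component_closed (x z w : V) : z \in [set y | connect (@adj G) x y] ->
  w \notin [set y | connect (@adj G) x y] -> ~~ adj z w.
Proof. by rewrite !inE => cz; apply: contra => a; apply: connect_trans cz (connect1 a). Qed.

End VertexCovers.

Lemma beta_induced (G : graph) (S0 : {set vert G}) : beta (induced S0) = beta_on S0.
Proof.
by rewrite betaE -(@beta_on_im (induced S0) G val val_inj) ?val_setT.
Qed.

Definition beta_bound (b d : nat) : nat := iter d step b.

Lemma beta_bound_S b d : beta_bound b d.+1 = step (beta_bound b d).
Proof. exact: iterS. Qed.

Lemma beta_bound_mono b d : beta_bound b d <= beta_bound b d.+1.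
Proof. by rewrite beta_bound_S /step leq_max leqnSn. Qed.

Lemma beta_bound_ge b d : b <= beta_bound b d.
Proof. by elim: d => // d IH; apply: leq_trans IH (beta_bound_mono _ _). Qed.

Lemma beta_on_ed (C : graph -> Prop) b
  (bC : forall G, C G -> forall S : {set vert G}, beta_on S <= b) d G :
  ed_le C d G -> forall S : {set vert G}, beta_on S <= beta_bound b d.
Proof.
elim => {d G} [d G CG S | d G v _ _ IH S | d G _ _ IH S].
- exact: leq_trans (bC G CG S) (beta_bound_ge _ _).
- have bv (T : {set vert G}) : T \subset [set~ v] -> beta_on T <= beta_bound b d.
    by move=> sT; rewrite (beta_on_induced sT); apply: IH.
  case: (boolP (v \in S)) => vS.
    rewrite beta_bound_S; apply: beta_on_del vS _ => T sT; apply: bv.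
    by apply: subset_trans sT _; apply/subsetP => z; rewrite !inE => /andP [].
  apply: leq_trans (beta_bound_mono _ _); apply: bv.
  by apply/subsetP => z zS; rewrite !inE; apply: contraNneq vS => <-.
- apply: beta_on_le => Y mY; case: (set_0Vmem Y) => [->|[y yY]]; first by rewrite cards0.
  pose Cy := [set z | connect (@adj G) y z].
  have yC : y \in Cy by rewrite inE connect0.
  have mYC := minimal_transversal_closed (@component_closed G y) mY yY yC.
  by rewrite (leq_trans (beta_on_ge mYC)) // (beta_on_induced (subsetIr S Cy)) IH.
Qed.

Lemma connect_map (G H : graph) (f : vert G -> vert H)
  (fadj : forall x y, adj (f x) (f y) = adj x y) x y :
  connect (@adj G) x y -> connect (@adj H) (f x) (f y).
Proof.
case/connectP => p pp ->; elim: p x pp => [|w p IH] x /=; first by rewrite connect0.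
case/andP => a pp; apply: connect_trans (IH w pp); apply: connect1; by rewrite fadj.
Qed.

Lemma iso_sym G H : iso G H -> iso H G.
Proof.
case=> f [[g fg gf] fadj]; exists g; split; first by exists f.
by move=> x y; rewrite -fadj !gf.
Qed.

Lemma connected_iso G H : iso G H -> connected G -> connected H.
Proof.
case=> f [[g fg gf] fadj] /andP [c0 /forallP ca]; apply/andP; split.
  by case/card_gt0P: c0 => x _; apply/card_gt0P; exists (f x).
apply/forallP => a; apply/forallP => b; rewrite -(gf a) -(gf b).
by apply: connect_map => //; move/forallP: (ca (g a)); apply.
Qed.

Section IsoInduced.
Variables (G H : graph) (f : vert G -> vert H) (g : vert H -> vert G).
Hypotheses (fg : cancel f g) (gf : cancel g f).
Hypothesis fadj : forall x y, adj (f x) (f y) = adj x y.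

Lemma gadj x y : adj (g x) (g y) = adj x y.
Proof. by rewrite -fadj !gf. Qed.

Lemma g_mem (S : {set vert G}) y : y \in f @: S -> g y \in S.
Proof. by case/imsetP => x xS ->; rewrite fg. Qed.

Lemma iso_induced (S : {set vert G}) : iso (induced S) (induced (f @: S)).
Proof.
pose h (x : vert (induced S)) : vert (induced (f @: S)) := Sub (f (val x)) (imset_f f (valP x)).
pose h' (y : vert (induced (f @: S))) : vert (induced S) := Sub (g (val y)) (g_mem (valP y)).
exists h; split.
  by exists h' => x; apply: val_inj; rewrite /= ?fg ?gf.
by move=> x y; rewrite /= /induced_adj /= fadj.
Qed.

Lemma im_setC1 v : f @: [set~ v] = [set~ f v].
Proof.
apply/setP => y; rewrite !inE; apply/imsetP/idP => [[x]|ny].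
  by rewrite !inE => nx ->; apply: contraNneq nx => /(can_inj fg) ->.
by exists (g y); rewrite ?gf // !inE; apply: contraNneq ny => <-; rewrite gf.
Qed.

Lemma im_comp x : f @: [set y | connect (@adj G) x y] = [set y | connect (@adj H) (f x) y].
Proof.
apply/setP => y; rewrite !inE; apply/imsetP/idP => [[z]|c].
  by rewrite inE => c ->; apply: connect_map.
exists (g y); rewrite ?gf // inE -(fg x); exact: connect_map gadj _ _ c.
Qed.

End IsoInduced.

Lemma ed_iso (C : graph -> Prop) (hC : iso_closed C) d G :
  ed_le C d G -> forall H, iso G H -> ed_le C d H.
Proof.
elim => {d G}.
- by move=> d G CG H iGH; apply: ed_in; apply: hC CG.
- move=> d G v cG _ IH H iGH; have [f [[g fg gf] fadj]] := iGH.
  apply: (@ed_del C d H (f v)); first exact: connected_iso cG.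
  apply: IH; rewrite /delv -(im_setC1 fg gf); exact: iso_induced fg gf fadj _.
- move=> d G ncG _ IH H iGH; have [f [[g fg gf] fadj]] := iGH.
  apply: ed_comp.
    by apply: contra ncG; apply: connected_iso; apply: iso_sym.
  move=> x; rewrite -(gf x); apply: IH; rewrite /component -(im_comp fg gf fadj).
  exact: iso_induced fg gf fadj _.
Qed.

Lemma one_eq (T : finType) : #|T| = 1 -> exists x0 : T, forall x : T, x = x0.
Proof.
move=> c; case: (mem_card1 c) => x0 e; exists x0 => x.
by have := e x; rewrite !inE => /esym /eqP.
Qed.

Lemma iso_one (A B : graph) : #|vert A| = 1 -> #|vert B| = 1 -> iso A B.
Proof.
move=> cA cB; case: (one_eq cA) => a0 ea; case: (one_eq cB) => b0 eb.
exists (fun _ => b0); split.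
  by exists (fun _ => a0) => x; rewrite ?(ea x) ?(eb x).
by move=> x y; rewrite (ea x) (ea y) !adj_irr.
Qed.

Section ComponentConnected.
Variables (G : graph) (x : vert G).
Local Notation Cx := [set y | connect (@adj G) x y].

Lemma path_lift p u (hu : u \in Cx) : path (@adj G) u p -> forall hz : last u p \in Cx,
  connect (@adj (component x)) (Sub u hu) (Sub (last u p) hz).
Proof.
elim: p u hu => [|w p IH] u hu /=.
  move=> _ hz; have -> : hz = hu by apply: bool_irrelevance.
  exact: connect0.
case/andP => a pp hz.
have hw : w \in Cx by move: hu; rewrite !inE => c; apply: connect_trans c (connect1 a).
by apply: connect_trans (IH w hw pp hz); apply: connect1.
Qed.

Lemma component_connected : connected (component x).
Proof.
have hx : x \in Cx by rewrite inE connect0.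
pose x0 : vert (component x) := Sub x hx.
have c0 : forall a : vert (component x), connect (@adj (component x)) x0 a.
  case=> y hy; have := hy; rewrite inE => /connectP [p pp ey].
  move: hy; rewrite ey => hy; exact: path_lift.
have sym : connect_sym (@adj (component x)) by apply: sym_connect_sym; exact: adj_sym.
apply/andP; split; first by apply/card_gt0P; exists x0.
apply/forallP => a; apply/forallP => b; apply: connect_trans (c0 b).
by rewrite sym.
Qed.

End ComponentConnected.

Lemma component_witness (G : graph) (Y : {set vert G}) (y : vert G) :
  minset (transversal [set: vert G]) Y -> y \in Y ->
  exists Z : {set vert (component y)}, minset (transversal [set: vert (component y)]) Z /\ #|Z| = #|Y|.
Proof.
move=> mY yY.
have yC : y \in [set z | connect (@adj G) y z] by rewrite inE connect0.
have m := minimal_transversal_closed (@component_closed G y) mY yY yC.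
rewrite setTI in m.
have vinj : injective (val : vert (component y) -> vert G) := val_inj.
have sY : Y \subset val @: [set: vert (component y)].
  by rewrite val_setT; exact: transversal_sub (minsetp m).
have [e _] := pre_im vinj sY.
exists (val @^-1: Y); split.
  by rewrite -(minimal_transversal_im vinj) // e val_setT.
by rewrite -{2}e card_imset.
Qed.

Lemma iso_image (A B : graph) (h : vert A -> vert B) (hinj : injective h)
  (hadj : forall x y, adj (h x) (h y) = adj x y) : iso A (induced (h @: [set: vert A])).
Proof.
pose k (b : vert A) : vert (induced (h @: [set: vert A])) := Sub (h b) (imset_f h (in_setT b)).
have kinj : injective k by move=> x y /(congr1 val) /= /hinj.
exists k; split; last by move=> x y; rewrite /= /induced_adj /= hadj.
apply: (@inj_card_bij _ _ k kinj).
rewrite card_sig.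
have -> : #|[pred x | x \in h @: [set: vert A]]| = #|h @: [set: vert A]| by apply: eq_card.
by rewrite card_imset // cardsT.
Qed.


(* Given F, a set Z of vertices and z2 in Z, the
   graph [double Z z2] has a hub vertex (None) and two copies of F; the hub
   is adjacent to Z in the left copy and to z2 in the right copy. *)
Section Doubling.
Variables (F : graph) (Z : {set vert F}) (z2 : vert F).
Local Notation VF := (vert F).

Definition double_adj (x y : option (VF + VF)) : bool :=
  match x, y with
  | None, Some (inl b) => b \in Z
  | Some (inl a), None => a \in Z
  | None, Some (inr b) => b == z2
  | Some (inr a), None => a == z2
  | Some (inl a), Some (inl b) => adj a b
  | Some (inr a), Some (inr b) => adj a b
  | _, _ => false
  end.

Lemma double_adj_sym : symmetric double_adj.
Proof. by case=> [[a|a]|] [[b|b]|] //=; rewrite adj_sym. Qed.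

Lemma double_adj_irr : irreflexive double_adj.
Proof. by case=> [[a|a]|] //=; exact: adj_irr. Qed.

Definition double : graph := @Graph (option (VF + VF)) double_adj double_adj_sym double_adj_irr.
Local Notation D := double.

Definition lft (a : VF) : vert D := Some (inl a).
Definition rgt (a : VF) : vert D := Some (inr a).
Lemma lft_inj : injective lft. Proof. by move=> a b []. Qed.
Lemma rgt_inj : injective rgt. Proof. by move=> a b []. Qed.
Lemma lft_adj a b : adj (lft a) (lft b) = adj a b. Proof. by []. Qed.
Lemma rgt_adj a b : adj (rgt a) (rgt b) = adj a b. Proof. by []. Qed.

Definition lpart (I : {set vert D}) : {set VF} := lft @^-1: I.
Definition rpart (I : {set vert D}) : {set VF} := rgt @^-1: I.
Definition dset (b : bool) (P Q : {set VF}) : {set vert D} :=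
  (if b then [set None] else set0) :|: lft @: P :|: rgt @: Q.

Lemma mem_lft (P : {set VF}) (x : vert D) :
  (x \in lft @: P) = if x is Some (inl c) then c \in P else false.
Proof.
case: x => [[c|c]|]; first by rewrite (mem_imset _ _ lft_inj).
all: by apply/negP => /imsetP [?].
Qed.

Lemma mem_rgt (P : {set VF}) (x : vert D) :
  (x \in rgt @: P) = if x is Some (inr c) then c \in P else false.
Proof.
case: x => [[c|c]|]; last 2 first; first by rewrite (mem_imset _ _ rgt_inj).
all: by apply/negP => /imsetP [?].
Qed.

Lemma mem_hub (b : bool) (x : vert D) :
  (x \in (if b then [set None] else set0)) = (x == None) && b.
Proof. by case: b; rewrite ?inE ?andbT ?andbF. Qed.

Lemma in_dset b (P Q : {set VF}) (x : vert D) : (x \in dset b P Q) =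
  match x with None => b | Some (inl a) => a \in P | Some (inr a) => a \in Q end.
Proof. by rewrite !in_setU mem_hub mem_lft mem_rgt; case: x => [[c|c]|]; rewrite ?orbF. Qed.

Lemma card_dset b P Q : #|dset b P Q| = b + #|P| + #|Q|.
Proof.
rewrite /dset cardsU (cardsU (if b then _ else _)) (card_imset _ lft_inj) (card_imset _ rgt_inj).
have e1 : (if b then [set None] else set0) :&: lft @: P = set0.
  by apply/setP => x; rewrite in_setI mem_hub mem_lft in_set0; case: x => [[c|c]|]; rewrite ?andbF.
have e2 : ((if b then [set None] else set0) :|: lft @: P) :&: rgt @: Q = set0.
  apply/setP => x; rewrite in_setI in_setU mem_hub mem_lft mem_rgt in_set0.
  by case: x => [[c|c]|]; rewrite ?andbF ?orbF.
rewrite e1 e2 !cards0 !subn0; congr (_ + _ + _).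
by clear e1 e2; case: b; rewrite ?cards1 ?cards0.
Qed.

Lemma card_double_set (I : {set vert D}) : #|I| = (None \in I) + #|lpart I| + #|rpart I|.
Proof.
have e : dset (None \in I) (lpart I) (rpart I) = I.
  by apply/setP => x; rewrite in_dset; case: x => [[c|c]|]; rewrite ?inE.
by rewrite -{1}e card_dset.
Qed.

Lemma indep_parts (I : {set vert D}) : indep I ->
  [/\ indep (lpart I), indep (rpart I) & None \in I -> [disjoint lpart I & Z] /\ z2 \notin rpart I].
Proof.
move/indepP => h; split.
- by apply/indepP => x y; rewrite !inE => xI yI; rewrite -lft_adj; apply: h.
- by apply/indepP => x y; rewrite !inE => xI yI; rewrite -rgt_adj; apply: h.
move=> NI; split.
  apply/pred0P => c /=; apply/negP => /andP [cL cZ].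
  by move: (h None (lft c) NI); rewrite inE in cL; move/(_ cL); rewrite /= cZ.
by rewrite inE; apply/negP => rI; move: (h None (rgt z2) NI rI); rewrite /= eqxx.
Qed.

Lemma indep_dset (b : bool) (P Q : {set VF}) : indep P -> indep Q ->
  (b -> [disjoint P & Z] /\ z2 \notin Q) -> indep (dset b P Q).
Proof.
move=> /indepP iP /indepP iQ hb; apply/indepP => x y; rewrite !in_dset.
have nZ c : b -> c \in P -> c \notin Z.
  by move=> bb cP; case: (hb bb) => /pred0P /(_ c) /= e _; apply: contraFN e => cZ; rewrite cP.
have n2 c : b -> c \in Q -> c != z2.
  by move=> bb cQ; case: (hb bb) => _; apply: contraNneq => <-.
case: x => [[a|a]|]; case: y => [[c|c]|] //=; try by [apply: iP | apply: iQ].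
- by move=> aP bb; apply: nZ.
- by move=> aQ bb; apply: n2.
- by move=> bb cP; apply: nZ.
- by move=> bb cQ; apply: n2.
Qed.

(* From now on Z is a minimal transversal of F through z2.  Then
   alpha D = 2 alpha F: an independent set through the hub has a left part
   avoiding Z, hence of size < alpha F. *)
Hypothesis z2Z : z2 \in Z.
Hypothesis mZ : minset (transversal [set: VF]) Z.
Local Notation a := (alpha [set: VF]).

Lemma avoiding_Z_small P : indep P -> [disjoint P & Z] -> #|P| < a.
Proof.
move=> iP dP; rewrite ltn_neqAle alpha_ge ?subsetT // andbT; apply/negP => /eqP e.
have mP : mis [set: VF] P by apply/misP; split; rewrite ?subsetT.
case: (transversal_hit (minsetp mZ) mP) => z zZ zP.
by move/pred0P: dP => /(_ z); rewrite /= zP zZ.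
Qed.

Lemma private_Z z : z \in Z -> exists2 P, mis [set: VF] P & Z :&: P = [set z].
Proof. by case/minimal_transversalP: mZ => _; apply. Qed.

Lemma alpha_pos : 0 < a.
Proof.
case: (private_Z z2Z) => P mP eP; rewrite -(mis_card mP); apply/card_gt0P; exists z2.
by case: (setI1_mem eP).
Qed.

Lemma alpha_double : alpha [set: vert D] = 2 * a.
Proof.
apply/eqP; rewrite eqn_leq; apply/andP; split.
  apply: alpha_le => I _ iI; rewrite card_double_set; case: (indep_parts iI) => iL iR h.
  have bL := alpha_ge (subsetT (lpart I)) iL; have bR := alpha_ge (subsetT (rpart I)) iR.
  case: (boolP (None \in I)) => NI /=.
    by have := avoiding_Z_small iL (h NI).1; move: bR; clear; lia.
  by move: bL bR; clear; lia.
case: (mis_exists [set: VF]) => P /misP [_ iP cP].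
have := alpha_ge (subsetT (dset false P P)) (indep_dset iP iP (fun bb => False_ind _ (notF bb))).
by rewrite card_dset cP /=; lia.
Qed.

Definition dblock : {set vert D} := dset false Z (Z :\ z2).

Lemma in_dblock (x : vert D) : (x \in dblock) =
  match x with None => false | Some (inl c) => c \in Z | Some (inr c) => (c != z2) && (c \in Z) end.
Proof. by rewrite in_dset; case: x => [[c|c]|] //; rewrite in_setD1. Qed.

Lemma card_dblock : #|dblock| = (#|Z| + #|Z|).-1.
Proof. by rewrite card_dset /= (cardsD1 z2 Z) z2Z; lia. Qed.

(* A maximum independent set of D through the hub has a maximum right part
   avoiding z2; one avoiding the hub has a maximum left part. *)
Lemma dblock_transversal : transversal [set: vert D] dblock.
Proof.
apply/transversalP; split=> [|I /misP [_ iI cI]]; first exact: subsetT.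
rewrite alpha_double card_double_set in cI; case: (indep_parts iI) => iL iR h.
have bL := alpha_ge (subsetT (lpart I)) iL; have bR := alpha_ge (subsetT (rpart I)) iR.
have tZ := minsetp mZ.
case: (boolP (None \in I)) => NI.
  have lL := avoiding_Z_small iL (h NI).1.
  have mR : mis [set: VF] (rpart I).
    by apply/misP; split; rewrite ?subsetT //; move: cI bR lL; rewrite NI /=; clear; lia.
  case: (transversal_hit tZ mR) => z zZ zR; exists (rgt z); last by move: zR; rewrite inE.
  by rewrite in_dblock /= zZ andbT; apply: contraNneq (h NI).2 => <-.
have mL : mis [set: VF] (lpart I).
  by apply/misP; split; rewrite ?subsetT //; move: cI bR bL; rewrite (negbTE NI) /=; clear; lia.
case: (transversal_hit tZ mL) => z zZ zL; exists (lft z); last by move: zL; rewrite inE.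
by rewrite in_dblock.
Qed.

(* Private sets: for z in the left copy, the private sets of z and z2 side
   by side; for z <> z2 in the right copy, the hub, the private set of z2
   minus z2 on the left and the private set of z on the right. *)
Lemma dblock_private_lft z : z \in Z -> exists2 I, mis [set: vert D] I & dblock :&: I = [set lft z].
Proof.
move=> zZ; case: (private_Z zZ) => Pz mPz ePz; case: (private_Z z2Z) => P2 mP2 eP2.
exists (dset false Pz P2).
  apply: mis_ge; rewrite ?subsetT //.
    exact: indep_dset (mis_indep mPz) (mis_indep mP2) (fun bb => False_ind _ (notF bb)).
  by rewrite alpha_double card_dset (mis_card mPz) (mis_card mP2) /=; lia.
apply/setP => x; rewrite in_setI in_dblock in_dset in_set1.
case: x => [[c|c]|] //=.
- apply/andP/eqP => [[cZ cP]|[->]]; first by rewrite (setI1_eq ePz cZ cP).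
  exact: setI1_mem ePz.
- by apply/negP => /andP [/andP [cn cZ] cP]; rewrite (setI1_eq eP2 cZ cP) eqxx in cn.
Qed.

Lemma dblock_private_rgt z : z \in Z -> z != z2 ->
  exists2 I, mis [set: vert D] I & dblock :&: I = [set rgt z].
Proof.
move=> zZ zn; case: (private_Z zZ) => Pz mPz ePz; case: (private_Z z2Z) => P2 mP2 eP2.
have [_ z2P2] := setI1_mem eP2.
have z2Pz : z2 \notin Pz by apply: contra zn => h; rewrite (setI1_eq ePz z2Z h).
have dP : [disjoint P2 :\ z2 & Z].
  apply/pred0P => c /=; rewrite in_setD1; apply/negP => /andP [/andP [cn cP] cZ].
  by rewrite (setI1_eq eP2 cZ cP) eqxx in cn.
exists (dset true (P2 :\ z2) Pz).
  apply: mis_ge; rewrite ?subsetT //.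
    by apply: indep_dset; [exact: indepS (subD1set _ _) (mis_indep mP2) | exact: mis_indep mPz |].
  have cP2 := mis_card mP2; rewrite (cardsD1 z2 P2) z2P2 in cP2.
  by rewrite alpha_double card_dset (mis_card mPz) /=; have := alpha_pos; move: cP2; clear; lia.
apply/setP => x; rewrite in_setI in_dblock in_dset in_set1.
case: x => [[c|c]|] //=.
- rewrite in_setD1; apply/negP => /andP [cZ /andP [cn cP]].
  by rewrite (setI1_eq eP2 cZ cP) eqxx in cn.
- apply/andP/eqP => [[/andP [cn cZ] cP]|[->]]; first by rewrite (setI1_eq ePz cZ cP).
  by rewrite zn zZ; case: (setI1_mem ePz).
Qed.

Lemma dblock_minimal : minset (transversal [set: vert D]) dblock.
Proof.
apply/minimal_transversalP; split=> [|[[z|z]|]]; rewrite ?in_dblock //.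
- exact: dblock_transversal.
- exact: dblock_private_lft.
- by case/andP => zn zZ; apply: dblock_private_rgt.
Qed.

End Doubling.

Lemma connectedP (G : graph) (a b : vert G) : connected G -> connect (@adj G) a b.
Proof. by case/andP => _ /forallP /(_ a) /forallP /(_ b). Qed.

(* If F is connected, so is its doubling, and deleting the hub leaves two
   components isomorphic to F; hence ed_C grows by at most one. *)
Section DoublingConnected.
Variables (F : graph) (Z : {set vert F}) (z2 : vert F).
Hypothesis z2Z : z2 \in Z.
Hypothesis connF : connected F.
Local Notation D := (double Z z2).
Local Notation D' := (delv (None : vert D)).

Lemma double_connected : connected D.
Proof.
have toHub (x : vert D) : connect (@adj D) x None.
  case: x => [[c|c]|]; last exact: connect0.
  - apply: connect_trans (connect_map (@lft_adj F Z z2) (connectedP c z2 connF)) _.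
    by apply: connect1; rewrite /= z2Z.
  - apply: connect_trans (connect_map (@rgt_adj F Z z2) (connectedP c z2 connF)) _.
    by apply: connect1; rewrite /= eqxx.
have sym : connect_sym (@adj D) by apply: sym_connect_sym; exact: adj_sym.
apply/andP; split; first by apply/card_gt0P; exists None.
by apply/forallP => x; apply/forallP => y; apply: connect_trans (toHub x) _; rewrite sym.
Qed.

Definition side (x : option (vert F + vert F)) : bool := if x is Some (inl _) then true else false.

Lemma side_closed s : closed (@adj D') [pred y : vert D' | side (val y) == s].
Proof.
move=> x y e; rewrite !inE; suff -> : side (val x) = side (val y) by [].
by move: e; case: x y => [[[c|c]|] px] [[[d|d]|] py] //=; rewrite !inE in px py.
Qed.

Lemma copy_notin_hub (s : bool) (c : vert F) : (if s then lft Z z2 c else rgt Z z2 c) \in [set~ None].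
Proof. by case: s; rewrite !inE. Qed.

Definition copy (s : bool) (c : vert F) : vert D' :=
  exist _ (if s then lft Z z2 c else rgt Z z2 c) (copy_notin_hub s c).

Lemma copy_inj s : injective (copy s).
Proof. by move=> a b /(congr1 val) /=; case: s; [exact: lft_inj | exact: rgt_inj]. Qed.

Lemma copy_adj s a b : adj (copy s a) (copy s b) = adj a b.
Proof. by case: s. Qed.

Lemma side_copy s c : side (val (copy s c)) = s.
Proof. by case: s. Qed.

Lemma copy_surj (x : vert D') : exists s c, x = copy s c.
Proof.
case: x => [[[c|c]|] p].
- by exists true, c; apply: val_inj.
- by exists false, c; apply: val_inj.
- by exfalso; move: p; rewrite !inE.
Qed.

Lemma component_copy s c : [set y | connect (@adj D') (copy s c) y] = copy s @: [set: vert F].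
Proof.
apply/setP => y; rewrite inE; apply/idP/imsetP => [cy|[c' _ ->]].
  case: (copy_surj y) => s' [c' ey]; exists c' => //; rewrite ey.
  have := closed_connect (side_closed s) cy; rewrite !inE side_copy eqxx ey side_copy.
  by move/esym/eqP ->.
by apply: (@connect_map F D' (copy s) (copy_adj s)); exact: connectedP.
Qed.

Lemma ed_double (C : graph -> Prop) (isoC : iso_closed C) d : ed_le C d F -> ed_le C d.+1 D.
Proof.
move=> edF; apply: (@ed_del C d D None double_connected); apply: ed_comp.
  apply/negP => /andP [_ /forallP /(_ (copy true z2)) /forallP /(_ (copy false z2)) cn].
  by have := closed_connect (side_closed true) cn; rewrite !inE !side_copy.
move=> x; case: (copy_surj x) => s [c ->]; apply: ed_iso isoC d F edF _ _.
by rewrite /component component_copy; exact: iso_image (@copy_inj s) (copy_adj s).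
Qed.

End DoublingConnected.

Lemma iterated_doubling (C : graph -> Prop) (isoC : iso_closed C) n d F (Z : {set vert F}) :
  connected F -> ed_le C d F -> minset (transversal [set: vert F]) Z ->
  exists G, [/\ connected G, ed_le C (n + d) G &
    exists Z' : {set vert G}, minset (transversal [set: vert G]) Z' /\ #|Z'| = #|Z|.-1 * 2 ^ n + 1].
Proof.
move=> cF eF mZ; elim: n => [|n [G [cG eG [Z' [mZ' cZ']]]]].
  exists F; split => //; exists Z; split => //.
  by rewrite expn0 muln1 addn1 prednK // (transversal_gt0 (minsetp mZ)).
case/card_gt0P: (transversal_gt0 (minsetp mZ')) => z2 z2Z; exists (double Z' z2); split.
- exact: double_connected z2Z cG.
- by rewrite addSn; apply: (ed_double z2Z cG isoC eG).
exists (dblock Z' z2); split; first exact: dblock_minimal z2Z mZ'.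
by rewrite (card_dblock z2Z mZ') cZ' expnS mulnCA; move: (#|Z|.-1 * 2 ^ n) => x; lia.
Qed.

Lemma beta_bound_shift b d : beta_bound b d.+1 = beta_bound (step b) d.
Proof. exact: iterSr. Qed.

Lemma beta_boundE b d : 1 < b -> beta_bound b d = (b - 1) * 2 ^ d + 1.
Proof.
move=> b2; elim: d => [|d IH]; first by rewrite expn0 muln1 subnK 1?ltnW.
rewrite beta_bound_S IH /step expnS mulnCA.
have : 0 < (b - 1) * 2 ^ d by rewrite muln_gt0 expn_gt0 subn_gt0 b2.
by move: ((b - 1) * 2 ^ d) => x; lia.
Qed.

Lemma beta_bound1 d : 0 < d -> beta_bound 1 d = 2 ^ d.-1 + 1.
Proof. by case: d => // d _; rewrite beta_bound_shift beta_boundE // mul1n. Qed.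

Lemma beta_bound0 d : 1 < d -> beta_bound 0 d = 2 ^ (d - 2) + 1.
Proof. by case: d => [|[|d]] // _; rewrite beta_bound_shift beta_bound1 // subn2. Qed.

Lemma beta_on_attained (G : graph) (S : {set vert G}) :
  0 < beta_on S -> exists2 Y, minset (transversal S) Y & #|Y| = beta_on S.
Proof.
case: (pickP [pred Y | minset (transversal S) Y]) => [Y0 h0 | h0] pos.
  have : 0 < #|[pred Y | minset (transversal S) Y]| by apply/card_gt0P; exists Y0.
  case/(eq_bigmax_cond (fun Y : {set vert G} => #|Y|)) => Y hY e.
  by exists Y => //; rewrite /beta_on -e.
by move: pos; rewrite /beta_on big_pred0.
Qed.

Lemma card_delv (G : graph) (v : vert G) : #|vert (delv v)| = #|vert G|.-1.
Proof. by rewrite card_sig -(cardsC1 v); apply: eq_card => x; rewrite !inE. Qed.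

Lemma card_induced (G : graph) (S : {set vert G}) : #|vert (induced S)| = #|S|.
Proof. by rewrite card_sig; apply: eq_card => x; rewrite !inE. Qed.

(* In a complete graph with a vertex, all vertices form a minimal blocking
   set (the maximum independent sets are the singletons). *)
Section CompleteGraph.
Variable A : graph.
Hypothesis completeA : forall x y : vert A, x != y -> adj x y.
Hypothesis nonemptyA : 0 < #|vert A|.

Lemma complete_alpha : alpha [set: vert A] = 1.
Proof.
apply/eqP; rewrite eqn_leq; apply/andP; split.
  apply: alpha_le => I _ /indepP iI; apply/card_le1_eqP => x y xI yI.
  by apply/eqP; apply: contraNT (@completeA y x) _; apply: iI.
by case/card_gt0P: nonemptyA => x _; rewrite -(cards1 x) alpha_ge ?subsetT ?indep1.
Qed.

Lemma complete_minimal : minset (transversal [set: vert A]) [set: vert A].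
Proof.
apply/minimal_transversalP; split=> [|y _].
  apply/transversalP; split=> [|I mI]; first exact: subsetT.
  have : 0 < #|I| by rewrite (mis_card mI) complete_alpha.
  by case/card_gt0P => y yI; exists y.
exists [set y]; last by rewrite setTI.
by apply: mis_ge; rewrite ?subsetT ?indep1 ?cards1 ?complete_alpha.
Qed.

End CompleteGraph.

Section OneVertex.
Variable A : graph.
Hypothesis oneA : #|vert A| = 1.

Lemma one_connected : connected A.
Proof.
case: (one_eq oneA) => x0 e; apply/andP; split; first by rewrite oneA.
by apply/forallP => x; apply/forallP => y; rewrite (e x) (e y) connect0.
Qed.

Lemma one_complete (x y : vert A) : x != y -> adj x y.
Proof. by case: (one_eq oneA) => x0 e; rewrite (e x) (e y) eqxx. Qed.

Lemma one_minimal : minset (transversal [set: vert A]) [set: vert A].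
Proof. by apply: complete_minimal; [exact: one_complete | rewrite oneA]. Qed.

Lemma one_vertex_ed : ed_le empty_class 1 A.
Proof.
case: (one_eq oneA) => x0 _; apply: (@ed_del empty_class 0 A x0 one_connected).
by apply: ed_in; rewrite /empty_class card_delv oneA.
Qed.

End OneVertex.

Definition k2adj (x y : bool) : bool := x != y.
Lemma k2_sym : symmetric k2adj. Proof. by move=> x y; rewrite /k2adj eq_sym. Qed.
Lemma k2_irr : irreflexive k2adj. Proof. by move=> x; rewrite /k2adj eqxx. Qed.
Definition K2 : graph := @Graph bool k2adj k2_sym k2_irr.
Definition K1 : graph := delv (true : vert K2).

Lemma card_K1 : #|vert K1| = 1.
Proof. by rewrite card_delv card_bool. Qed.

Lemma card_K2 : #|[set: vert K2]| = 2.
Proof. by rewrite cardsT card_bool. Qed.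

Lemma K2_connected : connected K2.
Proof.
apply/andP; split; first by apply/card_gt0P; exists true.
apply/forallP => x; apply/forallP => y.
by case: (eqVneq x y) => [->|nxy]; [exact: connect0 | exact: connect1].
Qed.

Lemma K2_minimal : minset (transversal [set: vert K2]) [set: vert K2].
Proof. by apply: complete_minimal; rewrite ?card_bool. Qed.

Lemma K2_ed (C : graph -> Prop) d : ed_le C d K1 -> ed_le C d.+1 K2.
Proof. exact: ed_del K2_connected. Qed.

Lemma class_bound (C : graph -> Prop) bC : hereditary C -> is_max_beta C bC ->
  forall G, C G -> forall S : {set vert G}, beta_on S <= bC.
Proof. by move=> herC [_ maxC] G CG S; rewrite -beta_induced; apply/maxC/herC. Qed.

Lemma one_vertex_in_class (C : graph -> Prop) F (x : vert F) : iso_closed C -> hereditary C ->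
  C F -> forall A, #|vert A| = 1 -> C A.
Proof.
move=> isoC herC CF A oneA; apply: isoC (herC F [set x] CF).
by apply: iso_one; rewrite // card_induced cards1.
Qed.

Lemma extremal_component (C : graph -> Prop) bC : hereditary C -> is_max_beta C bC -> 0 < bC ->
  exists F (Z : {set vert F}), [/\ C F, connected F, minset (transversal [set: vert F]) Z & #|Z| = bC].
Proof.
move=> herC [[G0 [CG0 bG0]] _] pos.
have [Y mY cY] : exists2 Y, minset (transversal [set: vert G0]) Y & #|Y| = beta_on [set: vert G0].
  by apply: beta_on_attained; rewrite -betaE bG0.
case/card_gt0P: (transversal_gt0 (minsetp mY)) => y yY.
case: (component_witness mY yY) => Z [mZ cZ].
exists (component y), Z; split=> //; first exact: herC.
  exact: component_connected.
by rewrite cZ cY -betaE.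
Qed.

Lemma empty_iso : iso_closed empty_class.
Proof. by move=> G H [f [fb _]]; rewrite /empty_class (bij_eq_card fb). Qed.

Lemma empty_bound G : empty_class G -> forall S : {set vert G}, beta_on S <= 0.
Proof. by move=> e S; apply: beta_on_le => Y _; rewrite -e max_card. Qed.

Lemma is_max_beta_ed (C : graph -> Prop) b F (Z : {set vert F}) d0 n D m :
  iso_closed C -> (forall G, C G -> forall S : {set vert G}, beta_on S <= b) ->
  connected F -> ed_le C d0 F -> minset (transversal [set: vert F]) Z ->
  n + d0 = D -> #|Z|.-1 * 2 ^ n + 1 = m -> beta_bound b D = m ->
  is_max_beta (ed_le C D) m.
Proof.
move=> isoC bndC cF eF mZ <- em bD; rewrite -bD.
split=> [|G eG]; last by rewrite betaE (beta_on_ed bndC eG).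
case: (iterated_doubling isoC n cF eF mZ) => G [_ eG [Z' [mZ' cZ']]].
exists G; split=> //; apply/eqP; rewrite eqn_leq betaE (beta_on_ed bndC eG) /=.
by rewrite bD -em -cZ' beta_on_ge.
Qed.

(* Seeds: K2 doubled d - 1 times if beta_C = 1, an extremal component of C
   doubled d times if beta_C >= 2; for treedepth, K1 (d = 1) or K2 doubled
   d - 2 times. *)
Theorem theorem4 :
  (forall (C : graph -> Prop) (bC : nat),
    iso_closed C -> hereditary C -> robust C ->
    is_max_beta C bC ->
    forall d : nat, 1 <= d ->
      (bC = 1 -> is_max_beta (ed_le C d) (2 ^ d.-1 + 1)) /\
      (2 <= bC -> is_max_beta (ed_le C d) ((bC - 1) * 2 ^ d + 1))) /\
  (forall d : nat, 1 <= d ->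
     is_max_beta (ed_le empty_class d) (if d == 1 then 1 else 2 ^ (d - 2) + 1)).
Proof.
split=> [C bC isoC herC _ maxC d d1 | [//|[_|d _]]].
- have bndC := class_bound herC maxC.
  split=> [bC1 | bC2].
    subst bC; have [F [Z [CF _ _ cZ]]] := extremal_component herC maxC (ltn0Sn 0).
    have [x _] : exists x, x \in Z by apply/card_gt0P; rewrite cZ.
    have K2e := K2_ed (ed_in 0 (one_vertex_in_class x isoC herC CF card_K1)).
    apply: (is_max_beta_ed (n := d.-1) isoC bndC K2_connected K2e K2_minimal).
    + by rewrite addn1 prednK.
    + by rewrite card_K2 mul1n.
    + exact: beta_bound1.
  have [F [Z [CF cF mZ cZ]]] := extremal_component herC maxC (ltnW bC2).
  apply: (is_max_beta_ed (n := d) isoC bndC cF (ed_in 0 CF) mZ).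
  + exact: addn0.
  + by rewrite cZ subn1.
  + exact: beta_boundE.
- apply: (is_max_beta_ed (n := 0) empty_iso empty_bound (one_connected card_K1)
            (one_vertex_ed card_K1) (one_minimal card_K1)) => //.
  by rewrite cardsT card_K1.
- have K2e := K2_ed (one_vertex_ed card_K1).
  apply: (is_max_beta_ed (n := d) empty_iso empty_bound K2_connected K2e K2_minimal).
  + exact: addn2.
  + by rewrite card_K2 mul1n subn2.
  + exact: beta_bound0.
Qed.
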